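(* Fix $k\in\{0,1,\dots,9\}$ and even integers $A$ and $B$. Then there exist $\hat\kappa,\beta,d_1,\dots,d_k$ in the K3 lattice $L$ such that $(\hat\kappa,\hat\kappa)=B$, $(\beta,\beta)=A$, $(\hat\kappa,\beta)=0$, $(\hat\kappa,d_i)=1$ and $(\beta,d_i)=0$ for all $i$, and $(d_i,d_j)=-2\delta_{ij}$ for all $i,j$; moreover, $\hat\kappa,\beta,d_1,\dots,d_k$ generate a primitive sublattice of $L$.
   Context: The K3 lattice $L$ is the even unimodular lattice of signature $(3,19)$, with its symmetric bilinear form $(\cdot,\cdot)$. A sublattice $S\subset L$ is primitive if $L/S$ is torsion-free, i.e. every element of $L$ lying in $S\otimes\mathbb{R}$ lies in $S$. *)

(* The K3 lattice modelled concretely as Z^22 with Gram matrix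
   U + U + U + E8(-1) + E8(-1). *)
From HB Require Import structures.
From mathcomp Require Import all_boot all_order all_algebra.
Set Implicit Arguments. Unset Strict Implicit. Unset Printing Implicit Defensive.
Import Order.TTheory GRing.Theory Num.Theory.
Local Open Scope ring_scope.

(* adjacency of the E8 Dynkin diagram (Bourbaki labels 1..8 shifted to 0..7):
   chain 0-2-3-4-5-6-7, and 1 attached to 3 *)
Definition e8_edge (i j : nat) : bool :=
  [|| (i == 0%N) && (j == 2%N), (i == 2%N) && (j == 3%N),
      (i == 3%N) && (j == 4%N), (i == 4%N) && (j == 5%N),
      (i == 5%N) && (j == 6%N), (i == 6%N) && (j == 7%N)
    | (i == 1%N) && (j == 3%N)].

Definition e8m (i j : nat) : int :=
  if i == j then -2 else if e8_edge i j || e8_edge j i then 1 else 0.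

(* Gram matrix entry of U (+) U (+) U (+) E8(-1) (+) E8(-1) on indices 0..21 *)
Definition k3_entry (i j : nat) : int :=
  if (i < 6)%N && (j < 6)%N then
    (if (i./2 == j./2) && (i != j) then 1 else 0)
  else if [&& (6 <= i)%N, (i < 14)%N, (6 <= j)%N & (j < 14)%N] then
    e8m (i - 6) (j - 6)
  else if [&& (14 <= i)%N, (i < 22)%N, (14 <= j)%N & (j < 22)%N] then
    e8m (i - 14) (j - 14)
  else 0.

Definition K3gram : 'M[int]_22 := \matrix_(i < 22, j < 22) k3_entry i j.

Definition K3L := 'rV[int]_22.

Definition k3form (x y : K3L) : int := (x *m K3gram *m y^T) 0 0.

Definition in_span (s : seq K3L) (x : K3L) : Prop :=
  exists c : 'I_(size s) -> int, x = \sum_(i < size s) c i *: s`_i.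

(* the sublattice S generated by s is primitive: L/S is torsion-free *)
Definition primitive_span (s : seq K3L) : Prop :=
  forall (x : K3L) (n : int), n != 0 -> in_span s (n *: x) -> in_span s x.

From mathcomp Require Import all_boot all_order all_algebra.
From mathcomp Require Import ring.
Local Open Scope ring_scope.
Import GRing.Theory.

(* Write e_0..e_21 for the standard basis of L = U+U+U+E8(-1)+E8(-1),
   where (e_0,e_1), (e_2,e_3), (e_4,e_5) are hyperbolic pairs and e_6..e_13,
   e_14..e_21 are the simple roots of the two E8(-1) summands.  Put
     kappa0 = e_1 + e_3 + (r_2 + r_3 + r_7) + (r'_2 + r'_3 + r'_7),  (kappa0,kappa0) = -8,
   and take kappa = kappa0 + (B/2 + 4) e_2, beta = e_4 + (A/2) e_5,
   d_0 = e_0 - e_1 and d_1..d_8 the pairwise orthogonal simple roots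
   r_0, r_1, r_4, r_6, r'_0, r'_1, r'_4, r'_6 (each meets kappa0 once).
   All required intersection numbers follow by bilinearity from finitely many
   Gram entries, which are checked by computation.  Primitivity follows from a
   general "pivot" criterion: if every generator has a coordinate equal to 1 at
   which all the other generators vanish, the generated sublattice is
   primitive (the coefficients of any element are read off at the pivots). *)

Lemma k3formDl x y z : k3form (x + y) z = k3form x z + k3form y z.
Proof. by rewrite /k3form !mulmxDl mxE. Qed.

Lemma k3formDr x y z : k3form z (x + y) = k3form z x + k3form z y.
Proof. by rewrite /k3form linearD /= mulmxDr mxE. Qed.

Lemma k3formZl a x y : k3form (a *: x) y = a * k3form x y.
Proof. by rewrite /k3form -!scalemxAl mxE. Qed.

Lemma k3formZr a x y : k3form y (a *: x) = a * k3form y x.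
Proof. by rewrite /k3form linearZ /= -scalemxAr mxE. Qed.

Definition k3formE := (k3formDl, k3formDr, k3formZl, k3formZr).

(* A plain fold over 0..n-1: unlike bigops it reduces under vm_compute. *)
Definition fold_sum (n : nat) (F : nat -> int) : int :=
  foldr (fun i acc => F i + acc) 0 (iota 0 n).

Lemma big_ord_fold_sum n (F : nat -> int) : \sum_(i < n) F i = fold_sum n F.
Proof.
rewrite /fold_sum -(big_mkord xpredT F) /index_iota subn0.
by elim: (iota 0 n) => [|a s IH]; rewrite ?big_nil // big_cons /= IH.
Qed.

Definition row_of (f : nat -> int) : K3L := \row_(q < 22) f q.

Definition coord_form (f g : nat -> int) : int :=
  fold_sum 22 (fun j => fold_sum 22 (fun i => f i * k3_entry i j) * g j).

Lemma k3form_row_of f g : k3form (row_of f) (row_of g) = coord_form f g.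
Proof.
rewrite /k3form /coord_form mxE -big_ord_fold_sum; apply: eq_bigr => j _.
rewrite !mxE -big_ord_fold_sum; congr (_ * _); apply: eq_bigr => i _.
by rewrite !mxE.
Qed.

(* Pivot criterion: if the i-th generator has coordinate 1 at position p i and
   every other generator vanishes there, then the span is primitive, since the
   coefficients of n *: x in the generators are the entries n * x_(p i). *)
Lemma primitive_span_pivots (s : seq K3L) (p : nat -> 'I_22) :
  (forall i j, (i < size s)%N -> (j < size s)%N ->
     s`_j 0 (p i) = (i == j)%:R) ->
  primitive_span s.
Proof.
move=> pivot x n n0 [c def_nx].
have coefE (i : 'I_(size s)) : c i = n * x 0 (p i).
  have := congr1 (fun M : K3L => M 0 (p i)) def_nx => /=.
  rewrite !mxE summxE (bigD1 i) //= big1 => [|j ji].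
    by rewrite !mxE pivot // eqxx mulr1 addr0 => ->.
  by rewrite mxE pivot // eq_sym (inj_eq val_inj) (negbTE ji) mulr0.
exists (fun i => x 0 (p i)).
have scaled : n *: x = n *: \sum_(i < size s) x 0 (p i) *: s`_i.
  by rewrite def_nx scaler_sumr; apply: eq_bigr => i _; rewrite coefE scalerA.
apply/matrixP => a b; have := congr1 (fun M : K3L => M a b) scaled.
by rewrite !mxE; apply: mulfI.
Qed.

Definition basis (q : nat) (r : nat) : int := (r == q)%:R.

Definition kappa0 (q : nat) : int := (q \in [:: 1; 3; 8; 9; 13; 16; 17; 21])%N%:R.

(* coordinates of the pairwise orthogonal roots r_0, r_1, r_4, r_6 of both E8's *)
Definition root_coords : seq nat := [:: 6; 7; 10; 12; 14; 15; 18; 20]%N.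

Definition root (m : nat) (q : nat) : int :=
  if m is m'.+1 then basis (nth 0%N root_coords m') q
  else basis 0 q - basis 1 q.

Definition kappa_vec (c : int) : K3L := row_of kappa0 + c *: row_of (basis 2).
Definition beta_vec (a : int) : K3L := row_of (basis 4) + a *: row_of (basis 5).

Lemma kappa_frame_gram :
  [/\ coord_form kappa0 kappa0 = -8, coord_form kappa0 (basis 2) = 1,
      coord_form (basis 2) kappa0 = 1 & coord_form (basis 2) (basis 2) = 0].
Proof. by split; vm_compute. Qed.

Lemma beta_frame_gram :
  [/\ coord_form (basis 4) (basis 4) = 0, coord_form (basis 4) (basis 5) = 1,
      coord_form (basis 5) (basis 4) = 1 & coord_form (basis 5) (basis 5) = 0].
Proof. by split; vm_compute. Qed.

Lemma cross_frame_gram :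
  [/\ coord_form kappa0 (basis 4) = 0, coord_form kappa0 (basis 5) = 0,
      coord_form (basis 2) (basis 4) = 0 & coord_form (basis 2) (basis 5) = 0].
Proof. by split; vm_compute. Qed.

Lemma root_gram_table :
  all (fun m => [&& coord_form kappa0 (root m) == 1,
                    coord_form (basis 2) (root m) == 0,
                    coord_form (basis 4) (root m) == 0,
                    coord_form (basis 5) (root m) == 0 &
     all (fun n => coord_form (root m) (root n) == if m == n then -2 else 0)
         (iota 0 9)]) (iota 0 9).
Proof. by vm_compute. Qed.

Lemma kappa_vec_sq c : k3form (kappa_vec c) (kappa_vec c) = 2 * c - 8.
Proof.
have [kk k2 k2' k22] := kappa_frame_gram.
by rewrite !k3formE !k3form_row_of kk k2 k2' k22; ring.
Qed.

Lemma beta_vec_sq a : k3form (beta_vec a) (beta_vec a) = 2 * a.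
Proof.
have [b44 b45 b54 b55] := beta_frame_gram.
by rewrite !k3formE !k3form_row_of b44 b45 b54 b55; ring.
Qed.

Lemma kappa_beta_orth c a : k3form (kappa_vec c) (beta_vec a) = 0.
Proof.
have [k4 k5 b24 b25] := cross_frame_gram.
by rewrite !k3formE !k3form_row_of k4 k5 b24 b25; ring.
Qed.

Lemma root_gram_row (m : nat) : (m < 9)%N ->
  [/\ coord_form kappa0 (root m) = 1, coord_form (basis 2) (root m) = 0,
      coord_form (basis 4) (root m) = 0, coord_form (basis 5) (root m) = 0 &
      forall n, (n < 9)%N ->
        coord_form (root m) (root n) = (if m == n then -2 else 0)].
Proof.
move=> lt_m; have /allP/(_ m) := root_gram_table.
rewrite mem_iota lt_m => /(_ isT) /and5P[/eqP -> /eqP -> /eqP -> /eqP -> /allP mn].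
by split=> // n lt_n; apply/eqP/mn; rewrite mem_iota.
Qed.

Lemma root_against_frame c a m : (m < 9)%N ->
  k3form (kappa_vec c) (row_of (root m)) = 1 /\
  k3form (beta_vec a) (row_of (root m)) = 0.
Proof.
case/root_gram_row=> km b2m b4m b5m _.
by rewrite !k3formE !k3form_row_of km b2m b4m b5m; split; ring.
Qed.

Lemma root_orthogonal m n : (m < 9)%N -> (n < 9)%N ->
  k3form (row_of (root m)) (row_of (root n)) = if m == n then -2 else 0.
Proof. by rewrite k3form_row_of => /root_gram_row[_ _ _ _]; apply. Qed.

Definition pivot (i : nat) : nat :=
  match i with 0 => 3 | 1 => 4 | 2 => 0 | i'.+3 => nth 0%N root_coords i' end.

Lemma pivot_table : all (fun i => [&& (pivot i < 22)%N,
    kappa0 (pivot i) == (i == 0%N)%:R, basis 2 (pivot i) == 0,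
    basis 4 (pivot i) == (i == 1%N)%:R, basis 5 (pivot i) == 0 &
    all (fun m => root m (pivot i) == (i == m.+2)%:R) (iota 0 9)]) (iota 0 11).
Proof. by vm_compute. Qed.

Lemma witnesses_primitive c a k : (k <= 9)%N ->
  primitive_span (kappa_vec c :: beta_vec a :: [seq row_of (root m) | m <- iota 0 k]).
Proof.
move=> le_k9; apply: (@primitive_span_pivots _ (fun i => inord (pivot i))) => i j.
rewrite /= size_map size_iota => lt_i lt_j.
have /allP/(_ i) := pivot_table; rewrite mem_iota (leq_trans lt_i) // => /(_ isT).
case/andP=> lt_p22 /and5P[/eqP pk /eqP p2 /eqP p4 /eqP p5 /allP proot].
case: j lt_j => [|[|j]] lt_j /=.
- by rewrite !mxE inordK // pk p2 mulr0 addr0.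
- by rewrite !mxE inordK // p4 p5 mulr0 addr0.
- rewrite (nth_map 0%N) ?size_iota // nth_iota // add0n mxE inordK //.
  by apply/eqP/proot; rewrite mem_iota /= (leq_trans _ le_k9).
Qed.

Theorem lemma4p5 (k : nat) (A B : int) :
  (k <= 9)%N -> (2 %| A)%Z -> (2 %| B)%Z ->
  exists (kappa beta : K3L) (d : 'I_k -> K3L),
    [/\ k3form kappa kappa = B, k3form beta beta = A, k3form kappa beta = 0,
        (forall i, k3form kappa (d i) = 1 /\ k3form beta (d i) = 0) /\
        (forall i j, k3form (d i) (d j) = (if i == j then -2 else 0))
      & primitive_span (kappa :: beta :: [seq d i | i <- enum 'I_k])].
Proof.
move=> le_k9 evenA evenB.
exists (kappa_vec ((B %/ 2)%Z + 4)), (beta_vec (A %/ 2)%Z), (fun i => row_of (root i)).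
have lt9 (i : 'I_k) : (i < 9)%N := leq_trans (ltn_ord i) le_k9.
split.
- by rewrite kappa_vec_sq -[RHS](divzK evenB); ring.
- by rewrite beta_vec_sq -[RHS](divzK evenA); ring.
- exact: kappa_beta_orth.
- split=> [i | i j]; first exact: root_against_frame (lt9 i).
  exact: root_orthogonal (lt9 i) (lt9 j).
- rewrite (_ : [seq _ | i <- enum 'I_k] = [seq row_of (root m) | m <- iota 0 k]).
    exact: witnesses_primitive.
  by rewrite -val_enum_ord -map_comp.
Qed.
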